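(* Let $(A,\rho,[-,-])$ be a Lie algebroid and let $\nabla^{(1)},\nabla^{(2)},\nabla^{(3)}$ be linear connections on $(A,\rho)$. Then for all $u,v,w\in\underline{\mathrm{Sec}}(A)$, $$R_{[\nabla^{(1)},\nabla^{(2)},\nabla^{(3)}]}(u,v)w=R_{\nabla^{(1)}}(u,v)w+R_{\nabla^{(2)}}(u,v)w+R_{\nabla^{(3)}}(u,v)w+2\nabla^{(2)}_{[u,v]}w+\sum_{i\neq j}(-1)^{i+j}[\nabla^{(i)}_u,\nabla^{(j)}_v]w,$$ where $[\nabla^{(1)},\nabla^{(2)},\nabla^{(3)}]:=\nabla^{(1)}-\nabla^{(2)}+\nabla^{(3)}$, the sum runs over ordered pairs $(i,j)$ with $i,j\in\{1,2,3\}$, $i\neq j$, and $[\nabla^{(i)}_u,\nabla^{(j)}_v]w:=\nabla^{(i)}_u\nabla^{(j)}_v w-(-1)^{\widetilde u\widetilde v}\nabla^{(j)}_v\nabla^{(i)}_u w$.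
   Context: All objects are $\mathbb{Z}_2$-graded (supergeometry); the Grassmann parity of an object $x$ is denoted $\widetilde{x}\in\mathbb{Z}_2$. An anchored vector bundle is a vector bundle $\pi: A\to M$ of supermanifolds with a vector bundle homomorphism over the identity $\rho: A\to\mathsf{T}M$; it induces an even $C^\infty(M)$-module map $\rho:\underline{\mathrm{Sec}}(A)\to\mathrm{Vect}(M)$, $\rho_u:=\rho(u)$. A Lie algebroid is an anchored vector bundle together with an $\mathbb{R}$-bilinear bracket $[-,-]$ on $\underline{\mathrm{Sec}}(A)$ such that $\widetilde{[u,v]}=\widetilde u+\widetilde v$, $[u,v]=-(-1)^{\widetilde u\widetilde v}[v,u]$, $[u,fv]=\rho_u(f)v+(-1)^{\widetilde u\widetilde f}f[u,v]$, and $[u,[v,w]]=[[u,v],w]+(-1)^{\widetilde u\widetilde v}[v,[u,w]]$ for all sections $u,v,w$ and $f\in C^\infty(M)$. A linear connection on $(A,\rho)$ is an $\mathbb{R}$-bilinear map $\nabla:\underline{\mathrm{Sec}}(A)\times\underline{\mathrm{Sec}}(A)\to\underline{\mathrm{Sec}}(A)$ with $\widetilde{\nabla_u v}=\widetilde u+\widetilde v$, $\nabla_{fu}v=f\nabla_u v$, and $\nabla_u(fv)=\rho_u(f)v+(-1)^{\widetilde u\widetilde f}f\nabla_u v$. The curvature of a linear connection $\nabla$ on a Lie algebroid is $R_\nabla(u,v)w:=\nabla_u\nabla_v w-(-1)^{\widetilde u\widetilde v}\nabla_v\nabla_u w-\nabla_{[u,v]}w$. *)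

(* Abstract algebraic model of a (super) Lie algebroid:
   SF = C^oo(M) (an R-algebra, Z2-graded, supercommutative),
   SS = Sec(A) (a left SF-module, Z2-graded).  Parities are given by
   homogeneity predicates homF p / homS p (p = false: even, true: odd). *)
From HB Require Import structures.
From mathcomp Require Import all_boot all_order all_algebra.
From mathcomp Require Import reals.
Set Implicit Arguments.
Unset Strict Implicit.
Unset Printing Implicit Defensive.
Import GRing.Theory Num.Theory.
Local Open Scope ring_scope.

Definition ssign (V : zmodType) (b : bool) (x : V) : V := if b then - x else x.

Record superData (R : realType) := SuperData {
  SF : algType R;
  SS : lmodType SF;
  homF : bool -> pred SF;
  homS : bool -> pred SS;
  homF0 : forall p, homF p 0;
  homFD : forall p f g, homF p f -> homF p g -> homF p (f + g);
  homFZ : forall p (r : R) f, homF p f -> homF p (r *: f);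
  homF1 : homF false 1;
  homFM : forall p q f g, homF p f -> homF q g -> homF (addb p q) (f * g);
  homF_decomp : forall f, exists f0 f1, [/\ homF false f0, homF true f1 & f = f0 + f1];
  homF_uniq : forall f, homF false f -> homF true f -> f = 0;
  supercomm : forall p q f g, homF p f -> homF q g -> f * g = ssign (p && q) (g * f);
  homS0 : forall p, homS p 0;
  homSD : forall p s t, homS p s -> homS p t -> homS p (s + t);
  homSZ : forall p q f s, homF p f -> homS q s -> homS (addb p q) (f *: s);
  homS_decomp : forall s, exists s0 s1, [/\ homS false s0, homS true s1 & s = s0 + s1];
  homS_uniq : forall s, homS false s -> homS true s -> s = 0
}.

Arguments SF {R} s0.
Arguments SS {R} s0.
Arguments homF {R} s0 _.
Arguments homS {R} s0 _.

Section Defs.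
Variables (R : realType) (D : superData R).
Local Notation F := (SF D).
Local Notation S := (SS D).

Record is_vector_field (p : bool) (X : F -> F) : Prop := {
  vf_add : forall f g, X (f + g) = X f + X g;
  vf_scale : forall (r : R) f, X (r *: f) = r *: X f;
  vf_par : forall q f, homF D q f -> homF D (addb p q) (X f);
  vf_leib : forall q f g, homF D q f ->
     X (f * g) = X f * g + ssign (p && q) (f * X g)
}.

Record is_anchor (rho : S -> F -> F) : Prop := {
  anc_add : forall u v f, rho (u + v) f = rho u f + rho v f;
  anc_lin : forall f u g, rho (f *: u) g = f * rho u g;
  anc_vf : forall p u, homS D p u -> is_vector_field p (rho u)
}.

Record is_Lie_algebroid (rho : S -> F -> F) (br : S -> S -> S) : Prop := {
  la_anchor : is_anchor rho;
  la_addl : forall u v w, br (u + v) w = br u w + br v w;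
  la_addr : forall u v w, br u (v + w) = br u v + br u w;
  la_scalel : forall (r : R) u v, br (r%:A *: u) v = r%:A *: br u v;
  la_scaler : forall (r : R) u v, br u (r%:A *: v) = r%:A *: br u v;
  la_par : forall p q u v, homS D p u -> homS D q v -> homS D (addb p q) (br u v);
  la_antisym : forall p q u v, homS D p u -> homS D q v ->
     br u v = - ssign (p && q) (br v u);
  la_leib : forall p q u f v, homS D p u -> homF D q f ->
     br u (f *: v) = rho u f *: v + ssign (p && q) (f *: br u v);
  la_jacobi : forall p q u v w, homS D p u -> homS D q v ->
     br u (br v w) = br (br u v) w + ssign (p && q) (br v (br u w))
}.

Record is_connection (rho : S -> F -> F) (nab : S -> S -> S) : Prop := {
  conn_addl : forall u v w, nab (u + v) w = nab u w + nab v w;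
  conn_addr : forall u v w, nab u (v + w) = nab u v + nab u w;
  conn_scaler : forall (r : R) u v, nab u (r%:A *: v) = r%:A *: nab u v;
  conn_par : forall p q u v, homS D p u -> homS D q v -> homS D (addb p q) (nab u v);
  conn_lin : forall f u v, nab (f *: u) v = f *: nab u v;
  conn_leib : forall p q u f v, homS D p u -> homF D q f ->
     nab u (f *: v) = rho u f *: v + ssign (p && q) (f *: nab u v)
}.

Definition curvature (br nab : S -> S -> S) (pu pv : bool) (u v w : S) : S :=
  nab u (nab v w) - ssign (pu && pv) (nab v (nab u w)) - nab (br u v) w.

Definition conn_comm (n1 n2 : S -> S -> S) (pu pv : bool) (u v w : S) : S :=
  n1 u (n2 v w) - ssign (pu && pv) (n2 v (n1 u w)).

Definition conn_alt (n1 n2 n3 : S -> S -> S) : S -> S -> S :=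
  fun u w => n1 u w - n2 u w + n3 u w.

(* index 0,1,2 |-> nab^(1), nab^(2), nab^(3) *)
Definition conn_idx (n1 n2 n3 : S -> S -> S) (i : 'I_3) : S -> S -> S :=
  match val i with 0 => n1 | 1 => n2 | _ => n3 end.

End Defs.

(** The commutator part of the curvature of a signed sum [sum_i e_i nab_i] of
    connections is bilinear: it expands into [sum_(i,j) e_i e_j [nab_i, nab_j]].
    The diagonal terms carry the sign [e_i^2 = 1] and recombine with the
    bracket terms into the curvatures [R_(nab_i)], up to the correction
    [(1 - e_i) nab_i_([u,v])], which for [nab1 - nab2 + nab3] is
    [2 nab2_([u,v])]. *)
From HB Require Import structures.
From mathcomp Require Import all_boot all_order all_algebra.
From mathcomp Require Import reals.
Set Implicit Arguments.
Unset Strict Implicit.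
Unset Printing Implicit Defensive.
Import GRing.Theory.
Local Open Scope ring_scope.

Section SignAdditive.
Variable V : zmodType.

Lemma ssign_is_zmod_morphism b : zmod_morphism (@ssign V b).
Proof. by case: b => x y //=; rewrite opprD. Qed.

HB.instance Definition _ b :=
  GRing.isZmodMorphism.Build V V (@ssign V b) (ssign_is_zmod_morphism b).

Lemma ssign_addb b1 b2 (x : V) : ssign (b1 (+) b2) x = ssign b1 (ssign b2 x).
Proof. by case: b1; case: b2 => //=; rewrite opprK. Qed.

End SignAdditive.

Section MorphD.
Variables (U V : zmodType) (f : U -> V).
Hypothesis fD : {morph f : x y / x + y}.

Lemma morphD_zmod_morphism : zmod_morphism f.
Proof. by move=> x y; apply: (addIr (f y)); rewrite -fD !subrK. Qed.

Let fA : {additive U -> V} :=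
  HB.pack f (GRing.isZmodMorphism.Build U V f morphD_zmod_morphism).

Lemma morphD_sum I (r : seq I) (P : pred I) (F : I -> U) :
  f (\sum_(i <- r | P i) F i) = \sum_(i <- r | P i) f (F i).
Proof. exact: (raddf_sum fA). Qed.

Lemma morphD_ssign b x : f (ssign b x) = ssign b (f x).
Proof. by case: b => //=; exact: (raddfN fA). Qed.

End MorphD.

Section SignedSumOfConnections.
Variables (R : realType) (D : superData R) (I : finType).
Variables (N : I -> SS D -> SS D -> SS D) (sg : I -> bool).
Variable nab : SS D -> SS D -> SS D.
Hypothesis N_addr : forall i u, {morph N i u : x y / x + y}.
Hypothesis nabE : forall u x, nab u x = \sum_i ssign (sg i) (N i u x).

Lemma conn_comm_signed_sum pu pv u v w :
  conn_comm nab nab pu pv u v w =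
  \sum_i \sum_j ssign (sg i (+) sg j) (conn_comm (N i) (N j) pu pv u v w).
Proof.
have nab2E x y : nab x (nab y w) =
    \sum_i \sum_j ssign (sg i (+) sg j) (N i x (N j y w)).
  rewrite !nabE; apply: eq_bigr => i _.
  rewrite (morphD_sum (N_addr i x)) raddf_sum; apply: eq_bigr => j _.
  by rewrite (morphD_ssign (N_addr i x)) ssign_addb.
rewrite /conn_comm !nab2E [X in _ - ssign _ X]exchange_big raddf_sum -sumrB.
apply: eq_bigr => i _.
rewrite raddf_sum -sumrB; apply: eq_bigr => j _.
by rewrite raddfB /= -!ssign_addb [_ (+) (_ (+) _)]addbC [sg j (+) _]addbC.
Qed.

Lemma curvature_signed_sum (br : SS D -> SS D -> SS D) pu pv u v w :
  curvature br nab pu pv u v w =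
    \sum_i curvature br (N i) pu pv u v w
  + \sum_i N i (br u v) w *+ (sg i).*2
  + \sum_i \sum_(j | j != i)
      ssign (sg i (+) sg j) (conn_comm (N i) (N j) pu pv u v w).
Proof.
have curvE n : curvature br n pu pv u v w =
    conn_comm n n pu pv u v w - n (br u v) w by [].
rewrite curvE conn_comm_signed_sum nabE -sumrB -!big_split /=.
apply: eq_bigr => i _; rewrite (bigD1 i) //= addbb curvE.
set c := conn_comm (N i) (N i) _ _ _ _ _; set b := N i _ w.
set O := \sum_(j | _) _; rewrite [LHS]addrAC; congr (_ + O).
by case: (sg i); rewrite /= ?mulr0n ?addr0 // opprK mulr2n addrA subrK.
Qed.

End SignedSumOfConnections.

Theorem mainTheorem4 (R : realType) (D : superData R)
    (rho : SS D -> SF D -> SF D) (br : SS D -> SS D -> SS D)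
    (n1 n2 n3 : SS D -> SS D -> SS D) :
  is_Lie_algebroid rho br ->
  is_connection rho n1 -> is_connection rho n2 -> is_connection rho n3 ->
  forall (pu pv : bool) (u v w : SS D), homS D pu u -> homS D pv v ->
  curvature br (conn_alt n1 n2 n3) pu pv u v w =
    curvature br n1 pu pv u v w + curvature br n2 pu pv u v w
    + curvature br n3 pu pv u v w + (n2 (br u v) w) *+ 2
    + \sum_(i < 3) \sum_(j < 3 | j != i)
        ssign (odd (i + j))
          (conn_comm (conn_idx n1 n2 n3 i) (conn_idx n1 n2 n3 j) pu pv u v w).
Proof.
move=> _ H1 H2 H3 pu pv u v w _ _.
have N_addr (i : 'I_3) x : {morph conn_idx n1 n2 n3 i x : y z / y + z}.
  case: i => [[|[|k]] ?] /=.
  - exact: (conn_addr H1 x).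
  - exact: (conn_addr H2 x).
  - exact: (conn_addr H3 x).
have altE x y : conn_alt n1 n2 n3 x y =
    \sum_(i < 3) ssign (odd i) (conn_idx n1 n2 n3 i x y).
  by rewrite !big_ord_recr big_ord0 /= add0r.
rewrite (curvature_signed_sum N_addr altE).
under [X in _ + X]eq_bigr => i _ do under eq_bigr => j _ do rewrite -oddD.
by rewrite !big_ord_recr !big_ord0 /= !add0r !mulr0n !addr0.
Qed.
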